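(* Let $R:\mathbb R^d\to(0,\infty)$ satisfy $|R(x)-R(y)|\le|x-y|$ for all $x,y$. Let $\gamma$ be a piecewise $C^1$ curve from $x$ to $y$, and define its index $N(\gamma)$ as follows: set $x_0=x$; having $x_j$, let $[x_j,y]_\gamma$ denote the part of $\gamma$ from $x_j$ to $y$; if $[x_j,y]_\gamma\subset B(x_j;\frac12R(x_j))$, stop with $x_{j+1}=y$ and $N(\gamma)=j+1$; otherwise let $x_{j+1}$ be the first point of $[x_j,y]_\gamma$ lying on the sphere $\partial B(x_j;\frac12R(x_j))$ and continue. Then \[ N(\gamma)\le 3\int_\gamma \frac{|dz|}{R(z)}+1. \]
   Context: $B(x;r)=\{y:|x-y|\le r\}$ denotes the closed Euclidean ball. *)

(* Points of R^d are row vectors 'rV[R]_d,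
   with the Euclidean norm defined explicitly below (the library's norm
   on matrices is the max-norm). *)
From HB Require Import structures.
From mathcomp Require Import all_boot all_order all_algebra.
From mathcomp Require Import all_classical all_reals all_analysis.
Set Implicit Arguments. Unset Strict Implicit. Unset Printing Implicit Defensive.
Import Order.TTheory GRing.Theory Num.Theory.
Import numFieldNormedType.Exports.
Local Open Scope classical_set_scope.
Local Open Scope ring_scope.

Definition enorm (R : realType) (d : nat) (v : 'rV[R]_d) : R :=
  Num.sqrt (\sum_(i < d) (v ord0 i) ^+ 2).

Definition piecewise_C1 (R : realType) (d : nat) (a b : R)
    (g : R -> 'rV[R]_d) : Prop :=
  {within `[a, b], continuous g} /\
  exists (k : nat) (p : nat -> R),
    [/\ p 0%N = a, p k = b, (forall i, (i < k)%N -> p i < p i.+1) &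
     forall i, (i < k)%N -> exists g' : R -> 'rV[R]_d,
        {within `[p i, p i.+1], continuous g'} /\
        forall t, p i < t < p i.+1 -> is_derive t 1 g (g' t)].

(* The line integral  \int_g |dz| / Rf(z) = \int_a^b |g'(t)| / Rf(g t) dt
   (extended-real valued Lebesgue integral). *)
Definition arc_integral (R : realType) (d : nat) (Rf : 'rV[R]_d -> R)
    (a b : R) (g : R -> 'rV[R]_d) : \bar R :=
  (\int[lebesgue_measure]_(t in `[a, b]) (enorm ('D_1 g t) / Rf (g t))%:E)%E.

Definition stays_in_ball (R : realType) (d : nat) (Rf : 'rV[R]_d -> R)
    (b : R) (g : R -> 'rV[R]_d) (t : R) : Prop :=
  forall s, t <= s <= b -> enorm (g s - g t) <= Rf (g t) / 2.

Definition first_on_sphere (R : realType) (d : nat) (Rf : 'rV[R]_d -> R)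
    (b : R) (g : R -> 'rV[R]_d) (t t' : R) : Prop :=
  [/\ t <= t' <= b, enorm (g t' - g t) = Rf (g t) / 2 &
      forall u, t <= u < t' -> enorm (g u - g t) != Rf (g t) / 2].

(* has_index Rf b g t n : the construction started at x_j = g t stops after
   exactly n further points, i.e. the index of [g t, y]_g is n.
   The index N(g) of the whole curve is the n with has_index Rf b g a n. *)
Inductive has_index (R : realType) (d : nat) (Rf : 'rV[R]_d -> R)
    (b : R) (g : R -> 'rV[R]_d) : R -> nat -> Prop :=
| has_index_stop t : stays_in_ball Rf b g t -> has_index Rf b g t 1
| has_index_step t t' n : ~ stays_in_ball Rf b g t ->
    first_on_sphere Rf b g t t' -> has_index Rf b g t' n ->
    has_index Rf b g t n.+1.

From HB Require Import structures.
From mathcomp Require Import all_boot all_order all_algebra.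
From mathcomp Require Import all_classical all_reals all_analysis.
From mathcomp Require Import ring lra measurable_realfun.
Import Order.TTheory GRing.Theory Num.Theory.
Import numFieldNormedType.Exports.
Local Open Scope classical_set_scope.
Local Open Scope ring_scope.

(* Write J(s, u) for the integral of |dz|/R(z) along g over the parameters [s, u].
   From x_j to the first point x_(j+1) on the sphere, the curve stays in the ball
   B(x_j; R(x_j)/2), where R <= 3 R(x_j)/2 since R is 1-Lipschitz; as it also
   travels a distance R(x_j)/2, each step costs J >= 1/3, whence N <= 3 J + 1 by
   induction along the construction.  The construction terminates because steps
   cannot pile up: at the supremum s of the parameters from which the bound fails,
   the curve moves by less than R(g s)/8 nearby while R stays above 7 R(g s)/8,
   so no step of length R(x_j)/2 fits there. *)

Lemma ler_of_sqr_le {R : realDomainType} (x y : R) :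
  0 <= y -> x ^+ 2 <= y ^+ 2 -> x <= y.
Proof. by move=> y0 xy; rewrite -subr_ge0; nra. Qed.

Section Euclidean.
Context {R : realType} {d : nat}.
Implicit Types v w x y : 'rV[R]_d.

Definition dot w v : R := \sum_(i < d) w ord0 i * v ord0 i.

Lemma sumsqr_ge0 v : 0 <= \sum_(i < d) v ord0 i ^+ 2.
Proof. by apply: sumr_ge0 => i _; exact: sqr_ge0. Qed.

Lemma enorm_ge0 v : 0 <= enorm v.
Proof. exact: sqrtr_ge0. Qed.

Lemma enorm_sqr v : enorm v ^+ 2 = \sum_(i < d) v ord0 i ^+ 2.
Proof. by rewrite sqr_sqrtr // sumsqr_ge0. Qed.

Lemma enorm0 : enorm (0 : 'rV[R]_d) = 0.
Proof. by rewrite /enorm big1 ?sqrtr0 // => i _; rewrite mxE expr0n. Qed.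

Lemma enormN v : enorm (- v) = enorm v.
Proof. by rewrite /enorm; congr Num.sqrt; apply: eq_bigr => i _; rewrite mxE sqrrN. Qed.

Lemma enorm_distC x y : enorm (x - y) = enorm (y - x).
Proof. by rewrite -enormN opprB. Qed.

Lemma dot_self v : dot v v = enorm v ^+ 2.
Proof. by rewrite enorm_sqr; apply: eq_bigr => i _; rewrite expr2. Qed.

Lemma dotZl c w v : dot (c *: w) v = c * dot w v.
Proof. by rewrite /dot mulr_sumr; apply: eq_bigr => i _; rewrite mxE mulrA. Qed.

Lemma dotBr w x y : dot w (x - y) = dot w x - dot w y.
Proof. by rewrite /dot -sumrB; apply: eq_bigr => i _; rewrite !mxE mulrBr. Qed.

(* With A = |w|^2, B = |v|^2 and C = <w, v>: sum_i (A v_i - C w_i)^2 = A (A B - C^2). *)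
Lemma cauchy_schwarz_sqr w v : dot w v ^+ 2 <= enorm w ^+ 2 * enorm v ^+ 2.
Proof.
rewrite !enorm_sqr; set A := \sum_(i < d) _; set B := \sum_(i < d) _.
set C := dot w v.
have [A0|Apos] := eqVneq A 0.
  have w0 i : w ord0 i = 0.
    by apply/eqP; rewrite -sqrf_eq0; move/psumr_eq0P: A0 => -> // j _; exact: sqr_ge0.
  have -> : C = 0 by rewrite /C /dot big1 // => i _; rewrite w0 mul0r.
  by rewrite expr0n /= mulr_ge0 // sumsqr_ge0.
have Agt0 : 0 < A by rewrite lt_def Apos sumsqr_ge0.
have : 0 <= A * (A * B - C ^+ 2).
  have <- : \sum_(i < d) (A * v ord0 i - C * w ord0 i) ^+ 2 = A * (A * B - C ^+ 2).
    transitivity (\sum_(i < d) (A ^+ 2 * v ord0 i ^+ 2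
        - (2 * A * C) * (w ord0 i * v ord0 i) + C ^+ 2 * w ord0 i ^+ 2)).
      by apply: eq_bigr => i _; ring.
    by rewrite big_split /= sumrB -!mulr_sumr -/A -/B -/(dot w v) -/C; ring.
  by apply: sumr_ge0 => i _; exact: sqr_ge0.
by rewrite pmulr_rge0 // subr_ge0.
Qed.

Lemma cauchy_schwarz w v : dot w v <= enorm w * enorm v.
Proof.
apply: ler_of_sqr_le; first by rewrite mulr_ge0 ?enorm_ge0.
by rewrite exprMn cauchy_schwarz_sqr.
Qed.

Lemma enormD x y : enorm (x + y) <= enorm x + enorm y.
Proof.
apply: ler_of_sqr_le; first by rewrite addr_ge0 ?enorm_ge0.
have -> : enorm (x + y) ^+ 2 = enorm x ^+ 2 + 2 * dot x y + enorm y ^+ 2.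
  rewrite !enorm_sqr /dot mulr_sumr -!big_split /=.
  by apply: eq_bigr => i _; rewrite mxE; ring.
have := cauchy_schwarz x y; nra.
Qed.

Lemma enorm_dist_dist x y : `|enorm x - enorm y| <= enorm (x - y).
Proof.
rewrite ler_norml; have := enormD (x - y) y; have := enormD (y - x) x.
rewrite !subrK enorm_distC; lra.
Qed.

Lemma dot_lipschitz w x y : `|dot w x - dot w y| <= enorm w * enorm (x - y).
Proof.
rewrite -dotBr ler_norml cauchy_schwarz andbT.
by have := cauchy_schwarz w (y - x); rewrite !dotBr enorm_distC; lra.
Qed.

Lemma enorm_le_mx_norm v : enorm v <= (d%:R + 1) * `|v|.
Proof.
have d1 : 0 < d%:R + 1 :> R by rewrite ltr_wpDl.
apply: ler_of_sqr_le; first by rewrite mulr_ge0 // ltW.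
rewrite enorm_sqr; apply: (@le_trans _ _ (\sum_(i < d) `|v| ^+ 2)).
  apply: ler_sum => i _; rewrite -real_normK ?num_real // lerXn2r ?nnegrE //.
  by rewrite [leRHS]mx_normrE (le_bigmax _ _ (ord0, i)).
rewrite sumr_const card_ord exprMn -[_ *+ d]mulr_natl ler_wpM2r ?sqr_ge0 //.
by rewrite natr1 -natrX ler_nat expnS expn1 (leq_trans (leqnSn d)) // leq_pmulr.
Qed.

End Euclidean.

Section EuclideanContinuity.
Context {R : realType} {d : nat}.

Lemma enorm_lipschitz_continuous {F : 'rV[R]_d -> R} {c : R} : 0 <= c ->
  (forall x y, `|F x - F y| <= c * enorm (x - y)) -> continuous F.
Proof.
move=> c0 Flip x; apply/(@cvgrPdist_lt _ _ _ _ (nbhs_filter x)) => e e0.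
have K0 : 0 < (c + 1) * (d%:R + 1) by rewrite mulr_gt0 // ltr_wpDl.
apply/nbhs_ballP; exists (e / ((c + 1) * (d%:R + 1))) => [|y /=]; first exact: divr_gt0.
rewrite -ball_normE /= ltr_pdivlMr // => xy.
apply: le_lt_trans (Flip x y) _.
have := ler_wpM2l c0 (enorm_le_mx_norm (x - y)); have := normr_ge0 (x - y); nra.
Qed.

Lemma enorm_continuous : continuous (@enorm R d).
Proof.
by apply: (enorm_lipschitz_continuous (c := 1)) => // x y; rewrite mul1r enorm_dist_dist.
Qed.

Lemma dot_continuous (w : 'rV[R]_d) : continuous (dot w).
Proof. exact: enorm_lipschitz_continuous (enorm_ge0 w) (dot_lipschitz w). Qed.

End EuclideanContinuity.

Lemma within_continuous_dist_lt {R : realType} {V : normedModType R}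
    {A : set R} {f : R -> V} {x : R} :
  {within A, continuous f} -> A x -> forall e, 0 < e ->
  exists2 del, 0 < del & forall y, A y -> `|x - y| < del -> `|f x - f y| < e.
Proof.
move=> /subspace_continuousP/(_ x) fc Ax e e0.
move: (fc Ax) => /(@cvgrPdist_lt _ _ _ _ (within_filter _ _))/(_ e e0).
by case/nbhs_ballP => del del0 fxy; exists del => // y Ay xy; apply: fxy.
Qed.

Lemma first_hitting_time {R : realType} {h : R -> R} {t b r : R} :
  {within `[t, b], continuous h} -> h t < r ->
  (exists2 s, t <= s <= b & r <= h s) ->
  exists t', [/\ t < t' <= b, h t' = r & forall u, t <= u < t' -> h u < r].
Proof.
move=> hc htr [s /andP[ts sb] rhs].
pose S := [set u | t <= u <= b /\ r <= h u].
have Ss : S s by split => //; apply/andP.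
have Sne : S !=set0 by exists s.
have Slb : has_lbound S by exists t => u [/andP[]].
have tinf : t <= inf S by apply: lb_le_inf => // u [/andP[]].
have infb : inf S <= b by apply: le_trans sb; exact: ge_inf.
have below u : t <= u < inf S -> h u < r.
  case/andP=> tu uinf; rewrite ltNge; apply/negP => ru.
  have : inf S <= u by apply: ge_inf => //; split => //; rewrite tu (le_trans (ltW uinf)).
  by rewrite leNgt uinf.
(* The infimum is approached from within S, where h >= r. *)
have r_le : r <= h (inf S).
  rewrite leNgt; apply/negP => hr.
  have Ainf : `[t, b]%classic (inf S) by rewrite /= in_itv /= tinf infb.
  have e0 : 0 < r - h (inf S) by rewrite subr_gt0.
  have [del del0 hdel] := within_continuous_dist_lt hc Ainf _ e0.
  have [u [/andP[tu ub] ru] uinf] := inf_adherent del0 (conj Sne Slb).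
  have infu : inf S <= u by apply: ge_inf => //; rewrite /S /= tu ub.
  have Au : `[t, b]%classic u by rewrite /= in_itv /= tu ub.
  have := hdel u Au; rewrite distrC ger0_norm ?subr_ge0 // ltrBlDl => /(_ uinf).
  by rewrite distrC => /(le_lt_trans (ler_norm _)); lra.
have hinf : h (inf S) = r.
  have [c /andP[tc cinf] hc_r] : exists2 c, t <= c <= inf S & h c = r.
    have sub : [set` `[t, inf S]] `<=` [set` `[t, b]].
      by apply: subset_itvl; rewrite bnd_simp.
    have : Num.min (h t) (h (inf S)) <= r <= Num.max (h t) (h (inf S)).
      by rewrite ge_min le_max r_le orbT ltW.
    by move/(IVT tinf (continuous_subspaceW sub hc)) => [c]; rewrite in_itv; exists c.
  move: cinf; rewrite le_eqVlt => /predU1P[<- // | cinf].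
  by have := below c; rewrite tc cinf hc_r ltxx => /(_ isT).
exists (inf S); split => //.
rewrite infb andbT lt_neqAle tinf andbT; apply/eqP => tE.
by move: htr; rewrite tE hinf ltxx.
Qed.

Section SphereCrossing.
Context {R : realType} {d : nat} {Rf : 'rV[R]_d -> R}
  (Rf_pos : forall x, 0 < Rf x)
  (Rf_lip : forall x y, `|Rf x - Rf y| <= enorm (x - y))
  {a b : R} {g : R -> 'rV[R]_d} (gc : {within `[a, b], continuous g}).

Lemma exists_first_on_sphere t : a <= t -> ~ stays_in_ball Rf b g t ->
  exists t', [/\ first_on_sphere Rf b g t t', t < t' &
    forall u, t <= u <= t' -> enorm (g u - g t) <= Rf (g t) / 2].
Proof.
move=> aT /existsNP[s /not_implyP[/andP[ts sb] /negP]]; rewrite -ltNge => far.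
pose h u := enorm (g u - g t).
have hc : {within `[t, b], continuous h}.
  have sub : [set` `[t, b]] `<=` [set` `[a, b]].
    by apply: subset_itvr; rewrite bnd_simp.
  have dist_c : continuous (fun v : 'rV[R]_d => enorm (v - g t)).
    apply: (enorm_lipschitz_continuous (c := 1)) => // x y.
    by rewrite mul1r (le_trans (enorm_dist_dist _ _)) // opprB addrA subrK.
  exact: within_continuous_comp (fun v _ => dist_c v) (continuous_subspaceW sub gc).
have ht : h t < Rf (g t) / 2 by rewrite /h subrr enorm0 divr_gt0.
have [|t' [/andP[tt' t'b] ht' before]] := first_hitting_time hc ht.
  by exists s; rewrite ?ts ?sb ?ltW.
exists t'; split => //.
- split => //; first by rewrite (ltW tt') t'b.
  by move=> u /before; rewrite lt_neqAle => /andP[].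
- move=> u /andP[tu]; rewrite le_eqVlt => /predU1P[-> | ut']; first by rewrite -ht'.
  by apply/ltW/before; rewrite tu ut'.
Qed.

(* Near s the curve stays within Rf(g s)/8 of g s, so its jumps are below Rf(g s)/4,
   while Rf(g t)/2 >= 7 Rf(g s)/16. *)
Lemma oscillation_lt_half_radius s : a <= s <= b ->
  exists2 del, 0 < del & forall t t', a <= t <= b -> a <= t' <= b ->
    `|s - t| < del -> `|s - t'| < del -> enorm (g t' - g t) < Rf (g t) / 2.
Proof.
move=> sab; set rho := Rf (g s).
have rho0 : 0 < rho := Rf_pos (g s).
have d1 : 0 < d%:R + 1 :> R by rewrite ltr_wpDl.
have As : `[a, b]%classic s by rewrite /= in_itv.
have e0 : 0 < rho / 8 / (d%:R + 1) by rewrite !divr_gt0.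
have [del del0 gnear] := within_continuous_dist_lt gc As _ e0.
have close y : a <= y <= b -> `|s - y| < del -> enorm (g s - g y) < rho / 8.
  move=> yab sy; apply: le_lt_trans (enorm_le_mx_norm _) _.
  by rewrite mulrC -ltr_pdivlMr // gnear //= in_itv.
exists del => // t t' tab t'ab st st'.
have := close t tab st; have := close t' t'ab st'.
have := Rf_lip (g s) (g t); rewrite ler_norml -/rho.
have := enormD (g t' - g s) (g s - g t); rewrite addrA subrK enorm_distC.
lra.
Qed.

End SphereCrossing.

Lemma steps_cluster_at_sup {R : realType} {T : set R} {rel : R -> R -> Prop} :
  has_sup T -> (forall t, T t -> exists t', [/\ T t', t < t' & rel t t']) ->
  forall del, 0 < del -> exists t t',
    [/\ T t, T t', `|sup T - t| < del, `|sup T - t'| < del & rel t t'].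
Proof.
move=> hsT step del del0.
have [t Tt st] := sup_adherent del0 hsT.
have [t' [Tt' tt' rtt']] := step t Tt.
have := sup_upper_bound hsT Tt; have := sup_upper_bound hsT Tt'.
by exists t, t'; rewrite !ger0_norm ?subr_ge0 //; split => //; lra.
Qed.

Lemma is_derive_dot {R : realType} {d : nat} (g : R -> 'rV[R]_d) (w : 'rV[R]_d)
    (x : R) (D : 'rV[R]_d) :
  is_derive x 1 g D -> is_derive x 1 (fun y => dot w (g y)) (dot w D).
Proof.
move=> gD; have dg := ex_derive (is_derive := gD).
have coord j : is_derive x 1 (fun y => g y ord0 j) (D ord0 j).
  apply: DeriveDef; first by move/derivable_mxP: dg; apply.
  by rewrite -(derive_val (is_derive := gD)) (derive_mx dg) mxE.
have -> : (fun y => dot w (g y)) = \sum_(j < d) (w ord0 j *: (fun y => g y ord0 j)).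
  by rewrite fct_sumE; apply/funext => y; apply: eq_bigr.
exact: is_derive_sum.
Qed.

(* Only the positive part of psi is compared with f, so f need not be integrable. *)
Lemma increment_le_integral {R : realType} (phi psi f : R -> R) (s u : R) :
  s < u -> {within `[s, u], continuous phi} -> {within `[s, u], continuous psi} ->
  (forall x, s < x < u -> is_derive x 1 phi (psi x)) ->
  measurable_fun `]s, u[ f ->
  (forall x, s < x < u -> 0 <= f x /\ psi x <= f x) ->
  ((phi u - phi s)%:E <= \int[lebesgue_measure]_(x in `[s, u]) (f x)%:E)%E.
Proof.
move=> su phic psic phi' mf psi_le.
have mpsi : measurable_fun `]s, u[ (fun x => (psi x)%:E).
  apply/measurable_EFinP; apply: open_continuous_measurable_fun => // x.
  by move/(continuous_within_itvP _ su): psic => [+ _ _]; rewrite inE; apply.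
have FTC : (\int[lebesgue_measure]_(x in `[s, u]) (psi x)%:E
    = (phi u)%:E - (phi s)%:E)%E.
  apply: continuous_FTC2 => //.
    move/(continuous_within_itvP _ su): phic => [_ l r]; split => // x.
    by rewrite in_itv /= => /phi' psix; exact: (ex_derive (is_derive := psix)).
  move=> x; rewrite in_itv /= => /phi' psix.
  by rewrite derive1E; exact: (derive_val (is_derive := psix)).
have mf' : measurable_fun `]s, u[ (fun x => (f x)%:E) by exact/measurable_EFinP.
rewrite EFinB -FTC (integral_itv_bndoo true false mpsi).
rewrite (integral_itv_bndoo true false mf').
rewrite integralE; apply: le_trans (leeB (lexx _) (integral_ge0 _ _)) _.
  by move=> x _; exact: funeneg_ge0.
rewrite sube0.
have := ge0_le_integral lebesgue_measure (measurable_itv `]s, u[) _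
  (measurable_funepos mpsi) mf'; apply.
- by move=> x _; exact: funepos_ge0.
- move=> x; rewrite /= in_itv /= => /psi_le[f0 psif].
  by rewrite funeposE ge_max !lee_fin psif f0.
Qed.

Section Partition.
Context {R : realType} {a b : R} (ab : a < b) {k : nat} {p : nat -> R}
  (p0 : p 0%N = a) (pk : p k = b) (p_incr : forall i, (i < k)%N -> p i < p i.+1).

Lemma partition_le i j : (i <= j)%N -> (j <= k)%N -> p i <= p j.
Proof.
move=> /subnK <-; elim: (j - i)%N => [|n IH] nik //.
by rewrite addSn (le_trans (IH (ltnW nik))) // ltW // p_incr.
Qed.

Lemma partition_ind (Q : R -> R -> Prop) :
  (forall s v u, a <= s <= v -> v <= u <= b -> Q s v -> Q v u -> Q s u) ->
  (forall i s u, (i < k)%N -> p i <= s <= u -> u <= p i.+1 -> Q s u) ->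
  forall s u, a <= s <= u -> u <= b -> Q s u.
Proof.
move=> Qcat Qpiece; rewrite -pk.
suff Qj j : (j <= k)%N -> forall s u, a <= s <= u -> u <= p j -> Q s u by exact: Qj.
elim: j => [_ | j IH jk] s u /andP[As su] up.
  have k_gt0 : (0 < k)%N.
    by rewrite lt0n; apply/eqP => k0; move: ab; rewrite -p0 -pk k0 ltxx.
  apply: (Qpiece 0%N) => //; first by rewrite p0 As su.
  by rewrite (le_trans up) // ltW // p_incr.
have apj : a <= p j by rewrite -p0 partition_le // ltnW.
have [upj | pju] := leP u (p j); first by apply: IH (ltnW jk) _ _ _ upj; rewrite As su.
have [pjs | spj] := leP (p j) s; first by apply: (Qpiece j) => //; rewrite pjs su.
have ub : u <= b by rewrite -pk (le_trans up) // partition_le.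
apply: (Qcat s (p j) u); rewrite ?As ?(ltW spj) ?(ltW pju) ?ub //.
  by apply: IH (ltnW jk) _ _ _ (lexx _); rewrite As ltW.
by apply: (Qpiece j) => //; rewrite lexx ltW.
Qed.

End Partition.

Definition arc_density {R : realType} {d : nat} (Rf : 'rV[R]_d -> R)
    (g : R -> 'rV[R]_d) (x : R) : R :=
  enorm ('D_1 g x) / Rf (g x).

Definition index_bounded {R : realType} {d : nat} (Rf : 'rV[R]_d -> R) (b : R)
    (g : R -> 'rV[R]_d) (t : R) : Prop :=
  exists n : nat, has_index Rf b g t n /\
    ((n%:R)%:E <= 3%:E * arc_integral Rf t b g + 1%:E)%E.

Section ArcIntegral.
Context {R : realType} {d : nat} {Rf : 'rV[R]_d -> R}
  (Rf_pos : forall x, 0 < Rf x)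
  (Rf_lip : forall x y, `|Rf x - Rf y| <= enorm (x - y))
  {a b : R} (ab : a < b) {g : R -> 'rV[R]_d}
  (gc : {within `[a, b], continuous g})
  {k : nat} {p : nat -> R} (p0 : p 0%N = a) (pk : p k = b)
  (p_incr : forall i, (i < k)%N -> p i < p i.+1)
  (g_C1 : forall i, (i < k)%N -> exists g' : R -> 'rV[R]_d,
        {within `[p i, p i.+1], continuous g'} /\
        forall t, p i < t < p i.+1 -> is_derive t 1 g (g' t)).

Local Notation arc_density := (arc_density Rf g).
Local Notation index_bounded := (index_bounded Rf b g).

Lemma arc_density_ge0 x : 0 <= arc_density x.
Proof. exact: divr_ge0 (enorm_ge0 _) (ltW (Rf_pos _)). Qed.

Lemma arc_integral_ge0 s u : (0 <= arc_integral Rf s u g)%E.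
Proof. by apply: integral_ge0 => x _; rewrite lee_fin arc_density_ge0. Qed.

Lemma arc_density_continuous i x : (i < k)%N -> p i < x < p i.+1 ->
  {for x, continuous arc_density}.
Proof.
move=> ik xi; have [g' [g'c g'D]] := g_C1 _ ik.
have Dg_near : \forall y \near x, g' y = 'D_1 g y.
  near=> y; apply/esym/(derive_val (is_derive := g'D y _)).
  by near: y; apply: near_in_itvoo; rewrite in_itv.
have Dgx : {for x, continuous ('D_1 g)}.
  apply: cvg_trans (near_eq_cvg Dg_near) _.
  rewrite (derive_val (is_derive := g'D x xi)).
  move/(continuous_within_itvP _ (p_incr _ ik)): g'c => [+ _ _].
  by apply; rewrite in_itv.
have gx : {for x, continuous g}.
  apply/differentiable_continuous/derivable1_diffP.
  exact: (ex_derive (is_derive := g'D x xi)).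
have Rf_cont : continuous Rf.
  by apply: (enorm_lipschitz_continuous (c := 1)) => // u v; rewrite mul1r.
apply: cvgM; first exact: continuous_comp Dgx (enorm_continuous _).
by apply: cvgV; [rewrite gt_eqF | exact: continuous_comp gx (Rf_cont _)].
Unshelve. all: by end_near. Qed.

Lemma measurable_arc_density : measurable_fun `[a, b] arc_density.
Proof.
apply: (partition_ind ab p0 pk p_incr (fun s u => measurable_fun `[s, u] arc_density)).
- move=> s v u /andP[_ sv] /andP[vu _] msv mvu.
  rewrite (@itv_bndbnd_setU _ _ _ (BRight v)) ?bnd_simp //.
  apply/measurable_funU => //; split => //.
  by apply: measurable_funS mvu => //; apply: subset_itvr; rewrite bnd_simp.
- move=> i s u ik /andP[pis su] upi.
  apply: (@measurable_fun_itv_cc _ s u false true).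
  apply: open_continuous_measurable_fun => // x.
  rewrite inE /= in_itv /= => /andP[sx xu]; apply: (arc_density_continuous _ _ ik).
  by rewrite (le_lt_trans pis sx) (lt_le_trans xu upi).
- by rewrite lexx ltW.
- exact: lexx.
Qed.

Lemma arc_integral_split s v u : a <= s <= v -> v <= u <= b ->
  arc_integral Rf s u g = (arc_integral Rf s v g + arc_integral Rf v u g)%E.
Proof.
move=> /andP[As sv] /andP[vu ub].
have m_in A : A `<=` `[a, b] -> measurable_fun A (fun x => (arc_density x)%:E).
  move=> Aab; apply/measurable_EFinP.
  exact: measurable_funS (measurable_itv _) Aab measurable_arc_density.
have su_ab : [set` `[s, u]] `<=` [set` `[a, b]].
  apply: subset_trans (subset_itvr _) (subset_itvl _);
  by rewrite bnd_simp ?(le_trans sv vu) ?As.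
have split_su : [set` `[s, u]] = `[s, v] `|` `]v, u].
  by rewrite (@itv_bndbnd_setU _ _ _ (BRight v)) ?bnd_simp.
rewrite /arc_integral split_su ge0_integral_setU //; first last.
- apply: lt_disjoint => x y; rewrite !in_itv /= => /andP[_ xv] /andP[vy _].
  exact: le_lt_trans xv vy.
- by move=> x _; rewrite lee_fin arc_density_ge0.
- by rewrite -split_su; exact: m_in.
rewrite (integral_itv_obnd_cbnd (r := v)) //.
by apply: m_in; apply: subset_trans su_ab; apply: subset_itvr; rewrite bnd_simp.
Qed.

(* Projecting on a fixed direction w reduces the estimate to the scalar fundamental
   theorem of calculus, piece by piece. *)
Lemma arc_integral_ge_projection w s u : a <= s <= u -> u <= b ->
  (forall x, s < x < u -> dot w ('D_1 g x) <= arc_density x) ->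
  ((dot w (g u - g s))%:E <= arc_integral Rf s u g)%E.
Proof.
move: s u; apply: (partition_ind ab p0 pk p_incr
  (fun s u => (forall x, s < x < u -> _) -> ((dot w (g u - g s))%:E <= _)%E)).
- move=> s v u Asv vub Isv Ivu Dle; rewrite (arc_integral_split _ _ _ Asv vub).
  have /andP[_ sv] := Asv; have /andP[vu _] := vub.
  have -> : dot w (g u - g s) = dot w (g v - g s) + dot w (g u - g v).
    by rewrite !dotBr; ring.
  rewrite EFinD leeD // ?Isv ?Ivu // => x /andP[h1 h2]; apply: Dle.
    by rewrite h1 (lt_le_trans h2 vu).
  by rewrite h2 (le_lt_trans sv h1).
move=> i s u ik /andP[pis su] upi Dle.
have [<- | su'] := eqVneq s u; first by rewrite dotBr subrr arc_integral_ge0.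
have [g' [g'c g'D]] := g_C1 _ ik.
have sub_piece : [set` `[s, u]] `<=` [set` `[p i, p i.+1]].
  by apply: subset_trans (subset_itvr _) (subset_itvl _); rewrite bnd_simp.
have sub_ab : [set` `[s, u]] `<=` [set` `[a, b]].
  apply: subset_trans sub_piece (subset_trans (subset_itvr _) (subset_itvl _)).
    by rewrite bnd_simp -p0 (partition_le p_incr) // ltnW.
  by rewrite bnd_simp -pk (partition_le p_incr).
have xin x : s < x < u -> p i < x < p i.+1.
  by case/andP=> sx xu; rewrite (le_lt_trans pis sx) (lt_le_trans xu upi).
have cw := dot_continuous w.
rewrite dotBr.
apply: (increment_le_integral (fun x => dot w (g x)) (fun x => dot w (g' x))).
- by rewrite lt_neqAle su' su.
- exact: within_continuous_comp (fun v _ => cw v) (continuous_subspaceW sub_ab gc).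
- exact: within_continuous_comp (fun v _ => cw v) (continuous_subspaceW sub_piece g'c).
- by move=> x /xin xi; exact: is_derive_dot (g'D x xi).
- apply: measurable_funS (measurable_itv _) _ measurable_arc_density.
  by apply: subset_trans sub_ab; apply: subset_itv_oo_cc.
- move=> x xsu; split; first exact: arc_density_ge0.
  by rewrite -(derive_val (is_derive := g'D x (xin x xsu))); exact: Dle.
Qed.

Lemma Rf_le_in_half_ball {x y} :
  enorm (y - x) <= Rf x / 2 -> Rf y <= 3 * Rf x / 2.
Proof. by have := Rf_lip y x; rewrite ler_norml; lra. Qed.

Lemma arc_integral_to_sphere_ge t t' : a <= t -> t < t' <= b ->
  enorm (g t' - g t) = Rf (g t) / 2 ->
  (forall u, t <= u <= t' -> enorm (g u - g t) <= Rf (g t) / 2) ->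
  (1%:E <= 3%:E * arc_integral Rf t t' g)%E.
Proof.
move=> At /andP[tt' t'b] on_sphere in_ball.
set r := Rf (g t) in on_sphere in_ball *; have r_gt0 : 0 < r := Rf_pos _.
set D := g t' - g t; set c := 4 / (3 * r ^+ 2).
have c_ge0 : 0 <= c by rewrite divr_ge0 // mulr_ge0 // sqr_ge0.
(* c is chosen so that <c D, D> = 1/3 and <c D, v> <= |v| / (3 r / 2). *)
have cD_D : dot (c *: D) D = 1 / 3.
  by rewrite dotZl dot_self on_sphere /c; field; rewrite gt_eqF.
have cD_le x : t < x < t' -> dot (c *: D) ('D_1 g x) <= arc_density x.
  case/andP=> tx xt'; set v := 'D_1 g x.
  have Rx : Rf (g x) <= 3 * r / 2.
    by apply: Rf_le_in_half_ball; apply: in_ball; rewrite !ltW.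
  have Rx_gt0 := Rf_pos (g x).
  have cs : c * dot D v <= c * (r / 2) * enorm v.
    by rewrite -mulrA ler_wpM2l // -on_sphere cauchy_schwarz.
  rewrite dotZl /arc_density ler_pdivlMr // -/v.
  have [neg | pos] := leP (c * dot D v) 0.
    exact: le_trans (mulr_le0_ge0 neg (ltW Rx_gt0)) (enorm_ge0 v).
  apply: le_trans (ler_pM (ltW pos) (ltW Rx_gt0) cs Rx) _.
  have cr : c * (r / 2) * (3 * r / 2) = 1 by rewrite /c; field; rewrite gt_eqF.
  by rewrite mulrAC cr mul1r.
have third_le : ((1 / 3)%:E <= arc_integral Rf t t' g)%E.
  by rewrite -cD_D; apply: arc_integral_ge_projection; rewrite ?At ?(ltW tt').
have -> : (1%:E = 3%:E * (1 / 3)%:E :> \bar R)%E by rewrite -EFinM; congr EFin; field.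
by apply: lee_wpmul2l.
Qed.

Lemma index_unbounded_step t : a <= t <= b -> ~ index_bounded t ->
  exists t', [/\ t < t' <= b, ~ index_bounded t' &
    enorm (g t' - g t) = Rf (g t) / 2].
Proof.
move=> /andP[At tb] unb.
have nst : ~ stays_in_ball Rf b g t.
  move=> st; apply: unb; exists 1%N; split; first exact: has_index_stop.
  by rewrite leeDr // mule_ge0 // arc_integral_ge0.
have [t' [fos tt' in_ball]] := exists_first_on_sphere Rf_pos gc _ At nst.
have [/andP[_ t'b] on_sphere _] := fos.
exists t'; split; rewrite ?tt' // => -[n [hn bn]]; apply: unb.
exists n.+1; split; first exact: has_index_step nst fos hn.
rewrite (arc_integral_split t t' b _ _) ?At ?(ltW tt') ?t'b ?lexx //.
rewrite ge0_muleDr ?arc_integral_ge0 //.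
rewrite -natr1 EFinD -addeA addeC; apply: leeD => //.
by apply: arc_integral_to_sphere_ge; rewrite ?tt'.
Qed.

End ArcIntegral.

Theorem lemma1p3 (R : realType) (d : nat) (Rf : 'rV[R]_d -> R)
    (Rf_pos : forall x, 0 < Rf x)
    (Rf_lip : forall x y, `|Rf x - Rf y| <= enorm (x - y))
    (a b : R) (ab : a < b) (g : R -> 'rV[R]_d)
    (g_pc1 : piecewise_C1 a b g) :
  exists N : nat, has_index Rf b g a N /\
    ((N%:R)%:E <= 3%:E * arc_integral Rf a b g + 1%:E)%E.
Proof.
case: g_pc1 => gc [k [p [p0 pk p_incr g_C1]]].
suff [n [hn bn]] : index_bounded Rf b g a by exists n.
apply: contrapT => unb_a.
pose T := [set t | a <= t <= b /\ ~ index_bounded Rf b g t].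
have Ta : T a by rewrite /T /= lexx ltW.
have hsT : has_sup T by split; [exists a | exists b => t [/andP[]]].
have supT : a <= sup T <= b.
  by rewrite sup_upper_bound //; apply: ge_sup => [|t [/andP[]]]; first exists a.
have [del del0 small] := oscillation_lt_half_radius Rf_pos Rf_lip gc _ supT.
have step t : T t -> exists t', [/\ T t', t < t' & enorm (g t' - g t) = Rf (g t) / 2].
  move=> [/[dup] tab /andP[At _] unb]; have [t' [/andP[tt' t'b] unb' jump]] :=
    index_unbounded_step Rf_pos Rf_lip ab gc p0 pk p_incr g_C1 _ tab unb.
  by exists t'; split => //; split; rewrite // t'b (le_trans At) ?ltW.
have [t [t' [[tab _] [t'ab _] st st' jump]]] := steps_cluster_at_sup hsT step _ del0.
by have := small t t' tab t'ab st st'; rewrite jump ltxx.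
Qed.
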